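(* Let $m\ge3$ and $s$ be odd positive integers, $n=sm$, and $\Gamma=C_n[mK_1]$. Define $$\sigma_1=(1,1,\dots,1,tc^{-1})r,\qquad \sigma_2=(t,\alpha_2,\alpha_3,\dots,\alpha_n)z \text{ with } \alpha_i=c^{(-1)^{i-1}(2i-3)}\ (2\le i\le n),$$ i.e. $\sigma_2=(t,c^{-1},c^{3},c^{-5},\dots,c^{5},c^{-3})z$, and $G=\langle\sigma_1,\sigma_2\rangle$. Then $\sigma_1$ has order $2n$, $\sigma_2$ has order $2m$, $\sigma_1\sigma_2$ has order $2$, and $|G|=4m^2n$.
   Context: $C_n[mK_1]$ is the graph with vertex set $\{1,\dots,n\}\times\{1,\dots,m\}$ in which $(i_1,j_1)$ is adjacent to $(i_2,j_2)$ if and only if $i_1\equiv i_2\pm1\pmod n$ (residues mod $n$ taken in $\{1,\dots,n\}$). Permutations act on the right ($x\alpha$ is the image of $x$) and products are composed left to right, both in $S_m$ and in $\mathrm{Aut}(\Gamma)$. For $\alpha_1,\dots,\alpha_n\in S_m$ and a permutation $x$ of $\{1,\dots,n\}$ in the dihedral group $D_n=\langle r,z\rangle$, $(\alpha_1,\dots,\alpha_n)x$ denotes the automorphism of $\Gamma$ mapping $(i,j)\mapsto(ix,\,j\alpha_i)$; $1$ denotes an identity permutation. Here $c=(1\,2\,\cdots\,m)\in S_m$; $t\in S_m$ fixes $1$ and maps $j\mapsto m-j+2$ for $2\le j\le m$; $r$ is the permutation $i\mapsto i+1 \pmod n$ of $\{1,\dots,n\}$; and $z$ fixes $1$ and maps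 $j\mapsto n-j+2$ for $2\le j\le n$. *)

From mathcomp Require Import all_boot all_order all_fingroup.
Set Implicit Arguments. Unset Strict Implicit. Unset Printing Implicit Defensive.

Local Open Scope group_scope.

(* Conventions: the vertex (i,j) of C_n[mK_1], 1<=i<=n, 1<=j<=m, is encoded
   as the pair (i-1, j-1) : 'I_n * 'I_m  (0-based indices).
   MathComp permutations compose left to right: (p * q) x = q (p x),
   matching the paper's convention. *)

Definition adjC (n m : nat) (u v : 'I_n * 'I_m) : bool :=
  ((u.1.+1 %% n) == v.1) || ((v.1.+1 %% n) == u.1).

Fact negmod_subproof k (i : 'I_k) : (k - i) %% k < k.
Proof. by rewrite ltn_pmod // (leq_ltn_trans (leq0n i) (ltn_ord i)). Qed.
Definition negmod k (i : 'I_k) : 'I_k := Ordinal (negmod_subproof i).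

Lemma negmodK k : involutive (@negmod k).
Proof.
move=> i; apply/val_inj => /=.
have k0 : 0 < k by rewrite (leq_ltn_trans (leq0n i) (ltn_ord i)).
case: (posnP i) => [->|ip].
  by rewrite subn0 modnn subn0 modnn.
rewrite (@modn_small (k - i)); last by rewrite ltn_subrL ip k0.
by rewrite subKn ?modn_small // ltnW.
Qed.

Lemma negmod_inj k : injective (@negmod k).
Proof. exact: inv_inj (@negmodK k). Qed.

Definition cperm (m : nat) : {perm 'I_m} := perm (@ordS_inj m).
(* t : fixes 1, j |-> m-j+2  (0-based: j |-> -j mod m) *)
Definition tperm_ (m : nat) : {perm 'I_m} := perm (@negmod_inj m).
Definition rperm (n : nat) : {perm 'I_n} := perm (@ordS_inj n).
(* z : fixes 1, i |-> n-i+2 *)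
Definition zperm (n : nat) : {perm 'I_n} := perm (@negmod_inj n).

(* (alpha_1,...,alpha_n) x : (i,j) |-> (i x, j alpha_i) *)
Definition wr_fun n m (a : 'I_n -> {perm 'I_m}) (x : {perm 'I_n})
  (v : 'I_n * 'I_m) : 'I_n * 'I_m := (x v.1, a v.1 v.2).

Lemma wr_fun_inj n m a x : injective (@wr_fun n m a x).
Proof.
move=> [i j] [i' j'] [/perm_inj ei]; subst i' => /perm_inj -> //.
Qed.

Definition wr n m a x : {perm 'I_n * 'I_m} := perm (@wr_fun_inj n m a x).

Definition sigma1 (n m : nat) : {perm 'I_n * 'I_m} :=
  wr (fun i : 'I_n => if (i.+1 == n)%N then tperm_ m * (cperm m)^-1 else 1)
     (rperm n).

(* sigma_2 = (t, alpha_2, ..., alpha_n) z,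
   alpha_k = c^((-1)^(k-1) (2k-3)) for 2 <= k <= n (k = 1-based index) *)
Definition alpha2 (m : nat) (k : nat) : {perm 'I_m} :=
  if k == 1%N then tperm_ m
  else (if odd (k - 1) then (cperm m)^-1 else cperm m) ^+ (2 * k - 3)%N.

Definition sigma2 (n m : nat) : {perm 'I_n * 'I_m} :=
  wr (fun i : 'I_n => alpha2 m i.+1) (zperm n).

From mathcomp Require Import all_boot all_order all_algebra all_fingroup all_solvable.
From mathcomp Require Import ring zify.
Set Implicit Arguments. Unset Strict Implicit. Unset Printing Implicit Defensive.
Import GRing.Theory Num.Theory.

(* Write n = 2h + 1 and m = 2g + 1.  Conjugating by the twist
   (i, j) |-> (i, (-1)^i j - [i odd]) of Z_n x Z_m turns sigma1 and sigma2 into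
   the affine maps (i, j) |-> (i + 1, -j - 1) and (i, j) |-> (-i, -j - 2i).
   The maps (i, j) |-> (+-i + a, +-j + l i + c), well defined because m divides
   n, form a group of order 4 m^2 n; the two affine maps generate it, and their
   orders are read off from closed forms of their powers. *)

Section IntegersMod.
Local Open Scope ring_scope.
Variable k : nat.

Definition ord_of_int (x : int) : 'I_k.+1 := inord `|(x %% k.+1)%Z|%N.

Lemma ord_of_intE x : ord_of_int x = (x %% k.+1)%Z :> int.
Proof.
rewrite /ord_of_int inordK; first by rewrite gez0_abs // modz_ge0.
by rewrite -ltz_nat gez0_abs ?modz_ge0 // ltz_pmod.
Qed.

Lemma ord_of_int_eqP x y : ord_of_int x = ord_of_int y <-> (k.+1 %| x - y)%Z.
Proof.
rewrite -eqz_mod_dvd; split=> [exy|].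
  by rewrite -[(x %% _)%Z]ord_of_intE -[(y %% _)%Z]ord_of_intE exy.
by move/eqP=> exy; apply: ord_inj; apply/eqP; rewrite -eqz_nat !ord_of_intE exy.
Qed.

Lemma ord_of_int_ord (i : 'I_k.+1) : ord_of_int i = i.
Proof.
apply: ord_inj; apply/eqP; rewrite -eqz_nat ord_of_intE modz_small //.
by rewrite ltz_nat ltn_ord andbT.
Qed.

Lemma ord_eqP (i j : 'I_k.+1) : i = j <-> (k.+1 %| i%:Z - j%:Z)%Z.
Proof. by rewrite -ord_of_int_eqP !ord_of_int_ord. Qed.

Lemma dvdz_sub_ord_of_int (d : nat) x : (d %| k.+1)%N -> (d %| x - (ord_of_int x)%:Z)%Z.
Proof. by move=> dk; rewrite ord_of_intE {1}(divz_eq x k.+1) addrK dvdz_mull. Qed.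

Lemma ord_of_int_signD_inj (b : bool) (x : int) :
  injective (fun i : 'I_k.+1 => ord_of_int ((-1) ^+ b * i%:Z + x)).
Proof.
move=> i i' /ord_of_int_eqP; rewrite opprD addrACA subrr addr0 -mulrBr rpredMsign.
by move/ord_eqP.
Qed.

Lemma ord_of_int_mulDl b x y :
  ord_of_int (b * (ord_of_int x)%:Z + y) = ord_of_int (b * x + y).
Proof.
apply/ord_of_int_eqP.
have -> : b * (ord_of_int x)%:Z + y - (b * x + y) = - b * (x - (ord_of_int x)%:Z) by ring.
by rewrite dvdz_mull // dvdz_sub_ord_of_int.
Qed.

Lemma ord_of_int_addl x y : ord_of_int ((ord_of_int x)%:Z + y) = ord_of_int (x + y).
Proof. by have := ord_of_int_mulDl 1 x y; rewrite !mul1r. Qed.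

Lemma ordSE (i : 'I_k.+1) : ordS i = ord_of_int (i%:Z + 1).
Proof. by apply/ord_inj/eqP; rewrite -eqz_nat ord_of_intE /= -modz_nat intS addrC. Qed.

Lemma negmodE (i : 'I_k.+1) : negmod i = ord_of_int (- i%:Z).
Proof.
apply/ord_inj/eqP; rewrite -eqz_nat ord_of_intE /= -modz_nat.
by rewrite -subzn ?modzDl // ltnW.
Qed.

Lemma cpermXE (j : 'I_k.+1) q : (cperm k.+1 ^+ q)%g j = ord_of_int (j%:Z + q%:Z).
Proof.
elim: q => [|q IHq]; first by rewrite expg0 perm1 addr0 ord_of_int_ord.
by rewrite expgSr permM IHq permE ordSE ord_of_int_addl -addrA (addrC q%:Z) -intS.
Qed.

Lemma cpermVXE (j : 'I_k.+1) q : ((cperm k.+1)^-1 ^+ q)%g j = ord_of_int (j%:Z - q%:Z).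
Proof.
apply: (@perm_inj _ (cperm k.+1 ^+ q)).
by rewrite expgVn permKV cpermXE ord_of_int_addl subrK ord_of_int_ord.
Qed.

Lemma sign_eq_mod (b b' : bool) :
  (2 < k.+1)%N -> (k.+1 %| (-1) ^+ b - (-1) ^+ b')%Z -> b = b'.
Proof.
move=> k_gt2; case: b; case: b' => //; rewrite dvdzE /=.
all: by move/dvdn_leq => /(_ isT) /(leq_trans k_gt2).
Qed.

End IntegersMod.

Section AffineMaps.
Local Open Scope ring_scope.
Context {N M : nat}.
Local Notation n := N.+1.
Local Notation m := M.+1.
Local Notation V := ('I_n * 'I_m)%type.

(* The shear l i is well defined modulo m only when m divides n; this is
   assumed from aff_mul on. *)
Definition aff_fun (d : bool) (a : int) (e : bool) (l c : int) (v : V) : V :=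
  (ord_of_int N ((-1) ^+ d * v.1%:Z + a),
   ord_of_int M ((-1) ^+ e * v.2%:Z + l * v.1%:Z + c)).

Lemma aff_fun_inj d a e l c : injective (aff_fun d a e l c).
Proof.
move=> [i j] [i' j']; rewrite /aff_fun -!addrA => -[/ord_of_int_signD_inj ei].
by subst i' => /ord_of_int_signD_inj->.
Qed.

Definition aff d a e l c : {perm V} := perm (@aff_fun_inj d a e l c).

Lemma affE d a e l c v : aff d a e l c v = aff_fun d a e l c v.
Proof. exact: permE. Qed.

Lemma aff_eq_mod (x y z : int) d a e l c a' l' c' :
  a = a' + x * n -> l = l' + y * m -> c = c' + z * m ->
  aff d a e l c = aff d a' e l' c'.
Proof.
move=> -> -> ->; apply/permP => -[i j]; rewrite !affE.
by congr pair; apply/ord_of_int_eqP/dvdzP; [exists x | exists (y * i%:Z + z)]; ring.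
Qed.

Arguments aff_eq_mod x y z {d a e l c a' l' c'}.

Lemma aff1 : aff false 0 false 0 0 = 1%g.
Proof.
apply/permP => -[i j]; rewrite perm1 affE /aff_fun /=.
by rewrite !mul1r !mul0r !addr0 !ord_of_int_ord.
Qed.

Hypothesis dvd_mn : (m %| n)%N.

Lemma aff_mul d1 a1 e1 l1 c1 d2 a2 e2 l2 c2 :
  (aff d1 a1 e1 l1 c1 * aff d2 a2 e2 l2 c2)%g =
  aff (d1 (+) d2) ((-1) ^+ d2 * a1 + a2) (e1 (+) e2)
      ((-1) ^+ e2 * l1 + l2 * (-1) ^+ d1) ((-1) ^+ e2 * c1 + l2 * a1 + c2).
Proof.
apply/permP => -[i j]; rewrite permM !affE /aff_fun /=.
set x := (-1) ^+ d1 * i%:Z + a1; set y := (-1) ^+ e1 * j%:Z + l1 * i%:Z + c1.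
have [q xq] := dvdzP (@dvdz_sub_ord_of_int N n x (dvdnn n)).
have [q1 xq1] := dvdzP (@dvdz_sub_ord_of_int N m x dvd_mn).
have [q2 yq2] := dvdzP (@dvdz_sub_ord_of_int M m y (dvdnn m)).
have Ex : (ord_of_int N x)%:Z = x - q * n by rewrite -xq; ring.
have Ex1 : (ord_of_int N x)%:Z = x - q1 * m by rewrite -xq1; ring.
have Ey : (ord_of_int M y)%:Z = y - q2 * m by rewrite -yq2; ring.
congr pair; apply/ord_of_int_eqP/dvdzP.
  by exists (- (-1) ^+ d2 * q); rewrite Ex /x signr_addb; ring.
by exists (- (-1) ^+ e2 * q2 - l2 * q1); rewrite Ex1 Ey /x /y !signr_addb; ring.
Qed.

Hypothesis M_gt1 : (1 < M)%N.

Lemma aff_eqP d a e l c d' a' e' l' c' :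
  aff d a e l c = aff d' a' e' l' c' <->
  [/\ d = d', e = e', (n %| a - a')%Z, (m %| l - l')%Z & (m %| c - c')%Z].
Proof.
split=> [eq_aff | [<- <- /dvdzP[x ea] /dvdzP[y el] /dvdzP[z ec]]]; last first.
  by apply: (aff_eq_mod x y z); rewrite -?ea -?el -?ec; ring.
have m_gt2 : (2 < m)%N by rewrite ltnS.
have n_gt2 : (2 < n)%N := leq_trans m_gt2 (dvdn_leq (ltn0Sn N) dvd_mn).
(* Evaluating at (0, 0), (1, 0) and (0, 1) recovers the parameters. *)
have at_point i j := congr1 (fun s : {perm V} => s (i, j)) eq_aff.
move: (at_point ord0 ord0) (at_point (inord 1) ord0) (at_point ord0 (inord 1)).
rewrite !affE /aff_fun /= !inordK ?(ltn_trans _ n_gt2) ?(ltn_trans _ m_gt2) //.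
rewrite !mulr0 !mulr1 !add0r !addr0.
move=> [/ord_of_int_eqP da /ord_of_int_eqP dc] [/ord_of_int_eqP dd /ord_of_int_eqP dl].
move=> [_ /ord_of_int_eqP de].
have dd' : (n %| (-1) ^+ d - (-1) ^+ d')%Z.
  suff -> : (-1) ^+ d - (-1) ^+ d' = (-1) ^+ d + a - ((-1) ^+ d' + a') - (a - a') :> int.
    exact: rpredB.
  ring.
have de' : (m %| (-1) ^+ e - (-1) ^+ e')%Z.
  suff -> : (-1) ^+ e - (-1) ^+ e' = (-1) ^+ e + c - ((-1) ^+ e' + c') - (c - c') :> int.
    exact: rpredB.
  ring.
split; [exact: sign_eq_mod n_gt2 dd' | exact: sign_eq_mod m_gt2 de' | by [] | | by []].
suff -> : l - l' = l + c - (l' + c') - (c - c') :> int by exact: rpredB.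
ring.
Qed.

Lemma aff_eq1 d a e l c :
  aff d a e l c = 1%g <-> [/\ ~~ d, ~~ e, (n %| a)%Z, (m %| l)%Z & (m %| c)%Z].
Proof.
rewrite -aff1 aff_eqP !subr0.
by split=> [[-> -> ? ? ?] | [/negbTE-> /negbTE-> ? ? ?]].
Qed.

Lemma aff_exp a l c k : l * a = 0 ->
  (aff false a false l c ^+ k)%g = aff false (a * k%:Z) false (l * k%:Z) (c * k%:Z).
Proof.
move=> la0; elim: k => [|k IHk]; first by rewrite expg0 !mulr0 aff1.
rewrite expgSr IHk aff_mul /=; apply: (aff_eq_mod 0 0 0); rewrite ?intS; try ring.
by rewrite mulrA la0; ring.
Qed.

Local Notation aff_params := (bool * 'I_n * bool * 'I_m * 'I_m)%type.

Definition aff_of (p : aff_params) : {perm V} :=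
  let: (d, a, e, l, c) := p in aff d a e l c.

Definition aff_group : {set {perm V}} := [set aff_of p | p : aff_params].

Lemma card_aff_group : #|aff_group| = (4 * m ^ 2 * n)%N.
Proof.
rewrite card_imset; last first.
  move=> [[[[d a] e] l] c] [[[[d' a'] e'] l'] c'] /aff_eqP[-> ->].
  by move=> /ord_eqP-> /ord_eqP-> /ord_eqP->.
rewrite cardT -cardE !card_prod card_bool !card_ord.
by rewrite expnS expn1; ring.
Qed.

Lemma mem_aff_group d a e l c : aff d a e l c \in aff_group.
Proof.
apply/imsetP; exists (d, ord_of_int N a, e, ord_of_int M l, ord_of_int M c) => //=.
by apply/aff_eqP; split; rewrite ?dvdz_sub_ord_of_int.
Qed.

Lemma aff_group_set : group_set aff_group.
Proof.
apply/group_setP; split; first by rewrite -aff1 mem_aff_group.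
move=> _ _ /imsetP[[[[[d a] e] l] c] _ ->] /imsetP[[[[[d' a'] e'] l'] c'] _ ->].
by rewrite aff_mul mem_aff_group.
Qed.

Lemma aff_group_sub (G : {group {perm V}}) :
    aff false 1 false 0 0 \in G -> aff false 0 false 1 0 \in G ->
    aff false 0 false 0 1 \in G -> aff true 0 false 0 0 \in G ->
    aff false 0 true 0 0 \in G ->
  aff_group \subset G.
Proof.
move=> GT GL GC GD GE; apply/subsetP => _ /imsetP[[[[[d a] e] l] c] _ ->] /=.
have -> : aff d a e l c = (aff false 0 e 0 0 * aff false 0 false 1 0 ^+ l *
    aff d 0 false 0 0 * aff false 0 false 0 1 ^+ c * aff false 1 false 0 0 ^+ a)%g.
  rewrite !aff_exp ?mulr0 ?mul0r // !aff_mul /= !addbF.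
  by apply: (aff_eq_mod 0 0 0); ring.
have GEe : aff false 0 e 0 0 \in G by case: e; rewrite ?aff1.
have GDd : aff d 0 false 0 0 \in G by case: d; rewrite ?aff1.
by rewrite !groupM ?groupX.
Qed.

End AffineMaps.

Arguments aff_eq_mod {N M} x y z {d a e l c a' l' c'}.

Lemma order_eq_dvdn (gT : finGroupType) (x : gT) k :
  (forall q, (x ^+ q == 1)%g = (k %| q)%N) -> #[x]%g = k.
Proof.
by move=> xk; apply/eqP; rewrite eqn_dvd order_dvdn xk dvdnn -xk expg_order eqxx.
Qed.

Section OddModuli.
Local Open Scope ring_scope.
Variables h g : nat.
Local Notation N := h.*2.
Local Notation M := g.*2.
Local Notation n := N.+1.
Local Notation m := M.+1.
Hypotheses (g_gt0 : (0 < g)%N) (dvd_mn : (m %| n)%N).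
Local Notation aff := (@aff N M).
Local Notation aff1 := (@aff1 N M).

Let M_gt1 : (1 < M)%N. Proof. by rewrite -(addnn g) -addn1 leq_add. Qed.

Definition aff_sigma1 := aff false 1 true 0 (-1).
Definition aff_sigma2 := aff true 0 true (-2) 0.

Lemma expg_aff_sigma1 q : (aff_sigma1 ^+ q)%g = aff false q (odd q) 0 (- (odd q)%:Z).
Proof.
elim: q => [|q IHq]; first by rewrite expg0 -aff1; apply: (aff_eq_mod 0 0 0) => /=; ring.
rewrite expgSr IHq (aff_mul dvd_mn) /=.
by case: (odd q); apply: (aff_eq_mod 0 0 0) => /=; ring.
Qed.

Lemma expg_aff_sigma2 q :
  (aff_sigma2 ^+ q)%g = aff (odd q) 0 (odd q) ((-1) ^+ odd q * 2 * q%:Z) 0.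
Proof.
elim: q => [|q IHq]; first by rewrite expg0 -aff1; apply: (aff_eq_mod 0 0 0) => /=; ring.
rewrite expgSr IHq (aff_mul dvd_mn) /=.
by case: (odd q); apply: (aff_eq_mod 0 0 0) => /=; ring.
Qed.

Lemma order_aff_sigma1 : #[aff_sigma1]%g = (2 * n)%N.
Proof.
apply: order_eq_dvdn => q; rewrite Gauss_dvd ?coprime2n /= ?odd_double // dvdn2.
rewrite expg_aff_sigma1; apply/eqP/andP => [/(aff_eq1 dvd_mn M_gt1)[_ oq nq _ _] //|].
by case=> /negbTE oq nq; apply/(aff_eq1 dvd_mn M_gt1); rewrite oq.
Qed.

Lemma order_aff_sigma2 : #[aff_sigma2]%g = (2 * m)%N.
Proof.
have odd_m : odd m by rewrite /= odd_double.
apply: order_eq_dvdn => q; rewrite Gauss_dvd ?coprime2n // dvdn2 expg_aff_sigma2.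
have m_dvd_l : (m %| (-1) ^+ odd q * 2 * q%:Z)%Z = (m %| q)%N.
  by rewrite -mulrA rpredMsign Gauss_dvdzr // coprimezE coprimen2.
apply/eqP/andP => [/(aff_eq1 dvd_mn M_gt1)[] | [oq mq]].
  by rewrite m_dvd_l.
by apply/(aff_eq1 dvd_mn M_gt1); rewrite oq m_dvd_l mq !dvdz0.
Qed.

Lemma order_aff_sigma12 : #[(aff_sigma1 * aff_sigma2)%g]%g = 2%N.
Proof.
have -> : (aff_sigma1 * aff_sigma2)%g = aff true (-1) false (-2) (-1).
  by rewrite (aff_mul dvd_mn) /=; apply: (aff_eq_mod 0 0 0); ring.
apply: nt_prime_order => //; last by apply/eqP => /(aff_eq1 dvd_mn M_gt1)[].
by rewrite expgS expg1 (aff_mul dvd_mn) -aff1 /=; apply: (aff_eq_mod 0 0 0); ring.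
Qed.

Lemma aff_group_sub_sigma (G : {group {perm 'I_n * 'I_m}}) :
  aff_sigma1 \in G -> aff_sigma2 \in G -> aff_group \subset G.
Proof.
move=> G1 G2.
have GR : aff false 0 true 0 (-1) \in G.
  suff <- : (aff_sigma1 ^+ n)%g = aff false 0 true 0 (-1) by rewrite groupX.
  by rewrite expg_aff_sigma1 /= odd_double; apply: (aff_eq_mod 1 0 0) => /=; ring.
(* 4 (g + 1)^2 = (m + 1)^2 = 1 mod m *)
have GL : aff false 0 false 1 0 \in G.
  suff <- : (aff_sigma2 ^+ (g.+1 ^ 2).*2)%g = aff false 0 false 1 0 by rewrite groupX.
  rewrite expg_aff_sigma2 odd_double.
  by apply: (aff_eq_mod 0 (g.*2.+3)%:Z 0) => /=; rewrite -?mul2n; ring.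
have GW : aff true 0 false 0 (-1) \in G.
  suff <- : (aff_sigma2 * aff false 0 true 0 (-1) * aff false 0 false 1 0 ^+ 2)%g =
            aff true 0 false 0 (-1) by rewrite !groupM ?groupX.
  rewrite (aff_exp dvd_mn) ?mulr0 // !(aff_mul dvd_mn) /=.
  by apply: (aff_eq_mod 0 0 0); ring.
(* -2 g = 1 mod m *)
have GC : aff false 0 false 0 1 \in G.
  suff <- : ((aff true 0 false 0 (-1) * aff true 0 false 0 (-1)) ^+ g)%g =
            aff false 0 false 0 1 by rewrite groupX ?groupM.
  rewrite (aff_mul dvd_mn) /= (aff_exp dvd_mn) /=; last ring.
  by apply: (aff_eq_mod 0 0 (-1)) => /=; rewrite -?mul2n; ring.
apply: (aff_group_sub dvd_mn) => //.
- suff <- : (aff_sigma1 ^+ n.+1)%g = aff false 1 false 0 0 by rewrite groupX.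
  by rewrite expg_aff_sigma1 /= odd_double; apply: (aff_eq_mod 1 0 0) => /=; ring.
- suff <- : (aff true 0 false 0 (-1) * aff false 0 false 0 1)%g = aff true 0 false 0 0.
    by rewrite groupM.
  by rewrite (aff_mul dvd_mn) /=; apply: (aff_eq_mod 0 0 0); ring.
suff <- : (aff false 0 true 0 (-1) * aff false 0 false 0 1)%g = aff false 0 true 0 0.
  by rewrite groupM.
by rewrite (aff_mul dvd_mn) /=; apply: (aff_eq_mod 0 0 0); ring.
Qed.

Lemma gen_aff_sigma : <<[set aff_sigma1; aff_sigma2]>>%g = aff_group.
Proof.
apply/eqP; rewrite eqEsubset aff_group_sub_sigma ?mem_gen ?set21 ?set22 // andbT.
rewrite -(gen_set_id (aff_group_set dvd_mn M_gt1)) genS //.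
by apply/subsetP => _ /set2P[]->; apply: (mem_aff_group dvd_mn M_gt1).
Qed.

End OddModuli.

Section Twist.
Local Open Scope ring_scope.
Variables h g : nat.
Local Notation N := h.*2.
Local Notation M := g.*2.
Local Notation n := N.+1.
Local Notation m := M.+1.

(* i is read as its representative in [0, n); since n is odd, the parity jump
   of i at the wrap-around n - 1 -> 0 is what the factor t c^-1 of sigma1
   compensates. *)
Definition twist_fun (v : 'I_n * 'I_m) : 'I_n * 'I_m :=
  (v.1, ord_of_int M ((-1) ^+ odd v.1 * v.2%:Z - (odd v.1)%:Z)).

Lemma twist_fun_inj : injective twist_fun.
Proof.
by move=> [i j] [i' j'] [ei]; subst i' => /ord_of_int_signD_inj->.
Qed.

Definition twist : {perm 'I_n * 'I_m} := perm twist_fun_inj.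

Lemma sigma1J_twist : (sigma1 n m ^ twist)%g = aff_sigma1 h g.
Proof.
apply: (mulgI twist); rewrite -conjgC; apply/permP => -[i j].
rewrite !permM /sigma1 /wr /twist /aff_sigma1 affE !permE /wr_fun /twist_fun /aff_fun /=.
congr pair; first by rewrite /rperm permE ordSE mul1r.
rewrite mul0r addr0 ord_of_int_mulDl /rperm permE.
case: eqP => [iN | iN].
  have -> : ordS i = ord0 by apply/val_inj; rewrite /= iN modnn.
  have -> : (i : nat) = N by case: iN.
  rewrite permM -[((cperm m)^-1)%g]expg1 cpermVXE /tperm_ permE negmodE.
  by rewrite ord_of_int_addl ord_of_int_mulDl /= odd_double /=; congr ord_of_int; ring.
have -> : (ordS i : nat) = i.+1.
  by rewrite /= modn_small // ltn_neqAle ltn_ord andbT; apply/eqP.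
by rewrite perm1 /=; case: (odd i); congr ord_of_int => /=; ring.
Qed.

Lemma sigma2J_twist : (sigma2 n m ^ twist)%g = aff_sigma2 h g.
Proof.
apply: (mulgI twist); rewrite -conjgC; apply/permP => -[i j].
rewrite !permM /sigma2 /wr /twist /aff_sigma2 affE !permE /wr_fun /twist_fun /aff_fun /=.
congr pair; first by rewrite /zperm permE negmodE; congr ord_of_int; ring.
rewrite addr0 ord_of_int_mulDl /zperm permE.
have [i0 | i_gt0] := posnP i.
  have -> : negmod i = ord0 by apply/val_inj; rewrite /= i0 subn0 modnn.
  rewrite i0 /alpha2 /= /tperm_ permE negmodE ord_of_int_mulDl.
  by congr ord_of_int; ring.
have -> : (negmod i : nat) = (n - i)%N.
  by rewrite /= modn_small // ltn_subrL i_gt0.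
rewrite oddB ?(ltnW (ltn_ord i)) //= odd_double.
rewrite /alpha2 eqSS eqn0Ngt i_gt0 subn1 /=.
have exp_alpha : ((2 * i.+1 - 3)%N : int) = 2 * i%:Z - 1.
  by rewrite -subzn ?PoszM ?intS; [ring | lia].
case: (odd i); rewrite /= ?cpermVXE ?cpermXE exp_alpha ord_of_int_mulDl.
all: by congr ord_of_int; ring.
Qed.

End Twist.

Theorem lemma5p1 (m s n : nat) (Hm : 3 <= m) (Hmo : odd m) (Hs : 0 < s)
  (Hso : odd s) (Hn : n = s * m) :
  [/\ #[sigma1 n m]%g = 2 * n,
      #[sigma2 n m]%g = 2 * m,
      #[(sigma1 n m * sigma2 n m)%g]%g = 2
    & #|<<[set sigma1 n m; sigma2 n m]>>%g| = 4 * m ^ 2 * n].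
Proof.
have dvd_mn : (m %| n)%N by rewrite Hn dvdn_mull.
have [g em] : exists g, m = g.*2.+1 by exists m./2; rewrite -[LHS]odd_double_half Hmo.
have [h en] : exists h, n = h.*2.+1.
  by exists n./2; rewrite -[LHS]odd_double_half Hn oddM Hso Hmo.
clear Hn; subst m n; have g_gt0 : (0 < g)%N by lia.
split.
- by rewrite -(orderJ _ (twist h g)) sigma1J_twist order_aff_sigma1.
- by rewrite -(orderJ _ (twist h g)) sigma2J_twist order_aff_sigma2.
- by rewrite -(orderJ _ (twist h g)) conjMg sigma1J_twist sigma2J_twist order_aff_sigma12.
rewrite -(cardJg _ (twist h g)) -genJ conjUg !conjg_set1 sigma1J_twist sigma2J_twist.
by rewrite gen_aff_sigma ?card_aff_group.
Qed.
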